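(* Let $(t_1,s_1),(t_2,s_2)\in\mathbb{C}^\times\times\mathbb{C}^\times$ with $t_1\ne t_2$ and $s_1\neq s_2$, let $X_1=A_2(t_1,s_1)$, $X_2=A_2(t_2,s_2)$, and let $\mathfrak{M}_2^2(2)$ be the subgroup of invertible $2\times2$ complex matrices generated by $X_1,X_2$. Then for every $A\in\mathfrak{M}_2^2(2)$, either $A^{-1}=A$, or $A^{-1}=r_AI_2-A$ for some $r_A\in\mathbb{C}$.
   Context: $\mathbb{C}^\times=\mathbb{C}\setminus\{0\}$; $A_2(t,s)=\begin{pmatrix} t & s\\ \frac{1-t^2}{s} & -t\end{pmatrix}$; $I_2$ is the $2\times2$ identity matrix. *)

From mathcomp Require Import all_boot all_algebra.
From mathcomp Require Import complex.
From mathcomp Require Import Rstruct.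
From Stdlib Require Reals.

Set Implicit Arguments.
Unset Strict Implicit.
Unset Printing Implicit Defensive.

Import GRing.Theory Num.Theory.
Local Open Scope ring_scope.

Definition C : numClosedFieldType := complex Rdefinitions.R.

Definition A2 (t s : C) : 'M[C]_2 :=
  \matrix_(i < 2, j < 2)
    if (i == 0 :> nat) then (if (j == 0 :> nat) then t else s)
    else (if (j == 0 :> nat) then (1 - t ^+ 2) / s else - t).

Inductive in_gen2 (X1 X2 : 'M[C]_2) : 'M[C]_2 -> Prop :=
  | gen_one : in_gen2 X1 X2 1%:M
  | gen_X1 : in_gen2 X1 X2 X1
  | gen_X2 : in_gen2 X1 X2 X2
  | gen_mul A B : in_gen2 X1 X2 A -> in_gen2 X1 X2 B -> in_gen2 X1 X2 (A *m B)
  | gen_inv A : in_gen2 X1 X2 A -> in_gen2 X1 X2 (invmx A).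

From mathcomp Require Import all_boot all_algebra.
From mathcomp Require Import complex Rstruct.
From mathcomp Require Import ring.
Set Implicit Arguments.
Unset Strict Implicit.
Unset Printing Implicit Defensive.

Import GRing.Theory Num.Theory.
Local Open Scope ring_scope.

(* X1 and X2 are involutions of determinant -1, so they generate a dihedral
   group: every element is a rotation (X1 X2)^z or a reflection (X1 X2)^z X1.
   Reflections are involutions.  Rotations have determinant 1, and for a 2x2
   matrix of determinant 1 the inverse is the adjugate tr(A) I - A. *)

Lemma unitr_involution (R : unitRingType) (x : R) :
  x * x = 1 -> x \is a GRing.unit.
Proof. by move=> xx; apply/unitrP; exists x. Qed.

Lemma invr_involution (R : unitRingType) (x : R) : x * x = 1 -> x^-1 = x.
Proof.
move=> xx; have ux := unitr_involution xx.
by rewrite -[RHS]mul1r -(mulVr ux) -mulrA xx mulr1.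
Qed.

Lemma semiconj_exprn (R : pzRingType) (a x y : R) (n : nat) :
  a * x = y * a -> a * x ^+ n = y ^+ n * a.
Proof.
move=> axya; elim: n => [|n IHn]; first by rewrite !expr0 mul1r mulr1.
by rewrite exprSr mulrA IHn -mulrA axya mulrA -exprSr.
Qed.

Section TwoInvolutions.
Variables (R : unitRingType) (a b : R).
Hypotheses (aa : a * a = 1) (bb : b * b = 1).

Local Notation rot := (a * b).

Definition dihedral_form (x : R) := exists z : int, x = rot ^ z \/ x = rot ^ z * a.

Lemma unitr_rot : rot \is a GRing.unit.
Proof. by rewrite unitrMl; apply: unitr_involution. Qed.

Lemma invr_rot : rot^-1 = b * a.
Proof.
by rewrite invrM ?invr_involution //; apply: unitr_involution.
Qed.

Lemma mul_invol_rotz (z : int) : a * rot ^ z = rot ^ (- z) * a.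
Proof.
case: z => n; last rewrite NegzE opprK.
all: rewrite -exprz_inv invr_rot; apply: semiconj_exprn.
- by rewrite mulrA aa mul1r -mulrA aa mulr1.
- by rewrite mulrA.
Qed.

Lemma reflection_sqr (z : int) : (rot ^ z * a) * (rot ^ z * a) = 1.
Proof.
rewrite mulrA -(mulrA _ a) mul_invol_rotz mulrA -exprzDr ?unitr_rot //.
by rewrite subrr expr0z mul1r aa.
Qed.

Lemma dihedral_form1 : dihedral_form 1.
Proof. by exists 0; left; rewrite expr0z. Qed.

Lemma dihedral_form_l : dihedral_form a.
Proof. by exists 0; right; rewrite expr0z mul1r. Qed.

Lemma dihedral_form_r : dihedral_form b.
Proof.
by exists (-1); right; rewrite exprN1 invr_rot -mulrA aa mulr1.
Qed.

Lemma dihedral_formM x y :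
  dihedral_form x -> dihedral_form y -> dihedral_form (x * y).
Proof.
have ur := unitr_rot.
move=> [m [->|->]] [n [->|->]].
- by exists (m + n); left; rewrite exprzDr.
- by exists (m + n); right; rewrite exprzDr // mulrA.
- by exists (m - n); right; rewrite -mulrA mul_invol_rotz mulrA -exprzDr.
- exists (m - n); left.
  by rewrite -mulrA [a * (_ * a)]mulrA mul_invol_rotz -mulrA aa mulr1 -exprzDr.
Qed.

Lemma dihedral_formV x : dihedral_form x -> dihedral_form x^-1.
Proof.
move=> [n [->|->]]; first by exists (- n); left; rewrite invr_expz.
by exists n; right; rewrite invr_involution ?reflection_sqr.
Qed.

End TwoInvolutions.

Lemma in_gen2_dihedral (X1 X2 A : 'M[C]_2) :
  X1 * X1 = 1 -> X2 * X2 = 1 -> in_gen2 X1 X2 A -> dihedral_form X1 X2 A.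
Proof.
move=> X11 X22; elim.
- exact: dihedral_form1.
- exact: dihedral_form_l.
- exact: dihedral_form_r.
- by move=> *; apply: dihedral_formM.
- by move=> *; apply: dihedral_formV.
Qed.

Section TwoByTwo.
Variable R : comUnitRingType.

Lemma det_mx2 (M : 'M[R]_2) : \det M = M 0 0 * M 1 1 - M 0 1 * M 1 0.
Proof.
rewrite (expand_det_row _ 0) big_ord_recl big_ord1 /cofactor !det_mx11 !mxE /=.
rewrite expr0 expr1 !mul1r mulN1r mulrN.
by congr (_ * M _ _ - M _ _ * M _ _); apply: ord_inj.
Qed.

Lemma adj_mx2 (M : 'M[R]_2) : \adj M = (\tr M)%:M - M.
Proof.
have ord2 (i : 'I_2) : i = 0 \/ i = 1.
  by case: i => [[|[|//]] ?]; [left|right]; apply: val_inj.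
have ord00 : ord0 = 0 :> 'I_2 by apply: val_inj.
have lift00 : lift 0 (0 : 'I_1) = 1 :> 'I_2 by apply: val_inj.
have lift10 : lift 1 (0 : 'I_1) = 0 :> 'I_2 by apply: val_inj.
have lift0 : lift ord0 ord0 = 1 :> 'I_2 by apply: val_inj.
apply/matrixP => i j.
rewrite !mxE /cofactor det_mx11 !mxE /mxtrace big_ord_recl big_ord1.
by case: (ord2 i) => ->; case: (ord2 j) => ->;
  rewrite ?mxE ?lift00 ?lift10 ?lift0 ?ord00 /=; ring.
Qed.

Lemma invmx_det1 (M : 'M[R]_2) : \det M = 1 -> invmx M = (\tr M)%:M - M.
Proof. by move=> dM; rewrite /invmx unitmxE dM unitr1 invr1 scale1r adj_mx2. Qed.

Lemma det_exprz n (M : 'M[R]_n.+1) (z : int) : \det M = 1 -> \det (M ^ z) = 1.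
Proof.
have det_exprn k : \det M = 1 -> \det (M ^+ k) = 1.
  move=> dM; elim: k => [|k IHk]; first by rewrite expr0 det1.
  by rewrite exprS -mulmxE det_mulmx dM IHk mulr1.
move=> dM; case: z => k; first exact: det_exprn.
by rewrite NegzE -invr_expz [_^-1]/(invmx _) det_inv det_exprn ?invr1.
Qed.

End TwoByTwo.

Lemma A2_involution (t s : C) : s != 0 -> A2 t s * A2 t s = 1.
Proof.
move=> s_neq0; rewrite -mulmxE; apply/matrixP => i j.
rewrite !mxE big_ord_recl big_ord1 !mxE.
by case: i => [[|[|//]] ?]; case: j => [[|[|//]] ?]; rewrite /= ?mxE /=;
  field.
Qed.

Lemma det_A2 (t s : C) : s != 0 -> \det (A2 t s) = -1.
Proof. by move=> s_neq0; rewrite det_mx2 !mxE /=; field. Qed.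

Theorem mainTheorem12 (t1 s1 t2 s2 : C) :
  t1 != 0 -> s1 != 0 -> t2 != 0 -> s2 != 0 ->
  t1 != t2 -> s1 != s2 ->
  forall A : 'M[C]_2, in_gen2 (A2 t1 s1) (A2 t2 s2) A ->
    invmx A = A \/ exists r : C, invmx A = r%:M - A.
Proof.
move=> _ s1_neq0 _ s2_neq0 _ _ A.
have X11 := A2_involution t1 s1_neq0; have X22 := A2_involution t2 s2_neq0.
move=> /(in_gen2_dihedral X11 X22) [z [->|->]].
- right; exists (\tr ((A2 t1 s1 * A2 t2 s2) ^ z)); apply: invmx_det1.
  by apply: det_exprz; rewrite -mulmxE det_mulmx !det_A2 // mulrNN mulr1.
- by left; apply: invr_involution; apply: reflection_sqr.
Qed.
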